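(* Let $T$ be any $3 \times 9$ matrix with entries in the ring $\mathbb{Z}_{2^{64}}$. Then there exist three distinct columns of $T$ such that the $3 \times 3$ submatrix formed by these columns has even determinant (that is, its determinant is divisible by $2$ in $\mathbb{Z}_{2^{64}}$), and consequently this $3\times 3$ submatrix, viewed as a map $\mathbb{Z}_{2^{64}}^3 \to \mathbb{Z}_{2^{64}}^3$, has a non-trivial kernel.
   Context: $\mathbb{Z}_{2^{64}}$ denotes the ring of integers modulo $2^{64}$. Parity of an element of $\mathbb{Z}_{2^{64}}$ is well defined since $2$ divides $2^{64}$. *)

From mathcomp Require Import all_boot all_order all_algebra.
Set Implicit Arguments. Unset Strict Implicit. Unset Printing Implicit Defensive.
Import GRing.Theory.

(* The ring Z_{2^64}.  Since 2^64 > 1, 'Z_(2^64) is exactly Z/(2^64)Z. *)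
Definition modulus : nat := (2 ^ 64)%N.
Notation Z64 := 'Z_modulus.

(* Parity of an element of Z_{2^64}: x is even iff its canonical
   representative in [0, 2^64) is even (well defined since 2 | 2^64). *)
Definition Z64_even (x : Z64) : bool := (2 %| (x : nat))%N.

From mathcomp Require Import all_boot all_order all_algebra.
Set Implicit Arguments.
Unset Strict Implicit.
Unset Printing Implicit Defensive.
Local Open Scope ring_scope.
Import GRing.Theory.

(* There are nine columns but only 2^3 = 8 parity patterns, so two columns
   agree mod 2: col i = col j + 2 w.  Add any third column; by multilinearity
   det = det(col j, col j, _) + 2 det(w, col j, _) = 2 det(w, col j, _) is
   even, and the submatrix sends 2^63 (e_i - e_j) to 2^64 w = 0. *)

Lemma det_row_congr (R : comPzRingType) n (M : 'M[R]_n) (i1 i2 : 'I_n)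
    (a : R) (w : 'rV_n) :
  row i1 M = row i2 M + a *: w -> i1 != i2 -> exists y, \det M = a * y.
Proof.
move=> eq_row ne12.
pose replace (v : 'rV_n) := \matrix_(k, l) (if k == i1 then v 0 l else M k l).
have row'_replace v : row' i1 (replace v) = row' i1 M.
  by apply/matrixP => k l; rewrite !mxE eq_sym (negbTE (neq_lift _ _)).
exists (\det (replace w)).
rewrite (determinant_multilinear (B := replace (row i2 M)) (C := replace w)
  (i0 := i1) (b := 1) (c := a)) ?row'_replace //.
  rewrite (determinant_alternate ne12) ?mulr0 ?add0r // => l.
  by rewrite !mxE eqxx eq_sym (negbTE ne12).
by rewrite eq_row; apply/rowP => l; rewrite !mxE eqxx mul1r.
Qed.

Lemma det_col_congr (R : comPzRingType) n (M : 'M[R]_n) (i1 i2 : 'I_n)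
    (a : R) (w : 'cV_n) :
  col i1 M = col i2 M + a *: w -> i1 != i2 -> exists y, \det M = a * y.
Proof.
move=> eq_col; rewrite -det_tr; apply: (det_row_congr (w := w^T)).
by rewrite -!tr_col eq_col linearD linearZ.
Qed.

Lemma mulmx_col_congr_kernel (R : comPzRingType) m n (M : 'M[R]_(m, n))
    (i1 i2 : 'I_n) (a h : R) (w : 'cV_m) :
  col i1 M = col i2 M + a *: w -> i1 != i2 -> h != 0 -> a * h = 0 ->
  exists v : 'cV_n, v != 0 /\ M *m v = 0.
Proof.
move=> eq_col ne12 nz_h ah0.
exists (h *: (delta_mx i1 0 - delta_mx i2 0)); split.
  apply: contraNneq nz_h => /matrixP/(_ i1 0).
  by rewrite !mxE !eqxx (negbTE ne12) /= subr0 mulr1 => ->.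
rewrite linearZ /= mulmxBr -!colE eq_col addrC addKr scalerA mulrC ah0.
exact: scale0r.
Qed.

Lemma exists_cols_same_pattern (T : Type) m n (p : T -> bool)
    (M : 'M[T]_(m, n)) :
  (2 ^ m < n)%N -> exists i j : 'I_n, i != j /\ forall r, p (M r i) = p (M r j).
Proof.
move=> lt_n.
pose pattern (j : 'I_n) : {ffun 'I_m -> bool} := [ffun r => p (M r j)].
have /injectivePn [i [j ne_ij eq_ij]] : ~~ injectiveb pattern.
  apply: contraTN lt_n => /injectiveP/leq_card.
  by rewrite card_ffun card_bool !card_ord -leqNgt.
exists i, j; split=> // r.
by have /ffunP/(_ r) := eq_ij; rewrite !ffunE.
Qed.

Lemma exists_ord_neq2 n (i j : 'I_n) :
  (2 < n)%N -> exists k : 'I_n, k != i /\ k != j.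
Proof.
move=> n_gt2.
have : ~~ ([set: 'I_n] \subset [set i; j]).
  apply: contraTN n_gt2 => /subset_leq_card.
  rewrite cardsT card_ord cards2 -leqNgt => /leq_trans; apply.
  by case: (i != j).
by case/subsetPn => k _; rewrite !inE negb_or => /andP; exists k.
Qed.

Lemma Zp_eqmod (m d : nat) (a b : 'Z_m) :
  (a = b %[mod d])%N -> exists x : 'Z_m, a = b + d%:R * x.
Proof.
wlog le_ba : a b / (b <= a)%N.
  move=> wlog_le eq_ab; have [le_ba | /ltnW le_ab] := leqP b a.
    exact: wlog_le.
  have [x eq_ba] := wlog_le b a le_ab (esym eq_ab).
  by exists (- x); rewrite eq_ba mulrN addrK.
move=> /eqP; rewrite eqn_mod_dvd // => /divnK eq_diff.
exists ((a - b) %/ d)%:R.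
by rewrite -{1}[a]natr_Zp -{1}[b]natr_Zp -natrM mulnC eq_diff -natrD subnKC.
Qed.

Lemma Zp_mx_eqmod (m d p q : nat) (A B : 'M['Z_m]_(p, q)) :
  (forall r c, A r c = B r c %[mod d])%N -> exists W, A = B + d%:R *: W.
Proof.
move=> eqAB.
have [x eq_x] :=
  fin_all_exists (fun rc : 'I_p * 'I_q => Zp_eqmod (eqAB rc.1 rc.2)).
exists (\matrix_(r, c) x (r, c)).
by apply/matrixP => r c; rewrite !mxE (eq_x (r, c)).
Qed.

Lemma Zp_dvd_natmul (m d : nat) (y : 'Z_m) :
  (1 < m)%N -> (d %| m)%N -> (d %| (d%:R * y)%R)%N.
Proof.
move=> m_gt1 d_dvd_m.
rewrite -[y]natr_Zp -natrM val_Zp_nat // /dvdn (modn_dvdm _ d_dvd_m).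
by rewrite -/(dvdn _ _) dvdn_mulr.
Qed.

Lemma Zp_torsion_natmul (m d : nat) :
  (1 < m)%N -> (1 < d)%N -> (d %| m)%N ->
  exists h : 'Z_m, h != 0 /\ d%:R * h = 0.
Proof.
move=> m_gt1 d_gt1 d_dvd_m.
have le_dm : (d <= m)%N by rewrite dvdn_leq // ltnW.
exists (m %/ d)%:R; split.
  rewrite -val_eqE /= val_Zp_nat // modn_small ?ltn_Pdiv ?(ltnW m_gt1) //.
  by rewrite -lt0n divn_gt0 // ltnW.
by rewrite -(natrM 'Z_m) mulnC divnK // pchar_Zp.
Qed.

(* [modulus] = 2^64 is a unary [nat]: its facts must be derived symbolically,
   never by computation (e.g. by [done] or [isT]). *)
Lemma two_dvd_modulus : (2 %| modulus)%N.
Proof. exact: dvdn_exp (dvdnn 2). Qed.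

Lemma modulus_gt1 : (1 < modulus)%N.
Proof.
have modulus_gt0 : (0 < modulus)%N by rewrite /modulus expn_gt0.
exact: dvdn_leq modulus_gt0 two_dvd_modulus.
Qed.

Theorem mainTheorem1 (T : 'M[Z64]_(3, 9)) :
  exists f : 'I_3 -> 'I_9,
    injective f /\
    Z64_even (\det (colsub f T)) /\
    (exists v : 'cV[Z64]_3, v != 0 /\ colsub f T *m v = 0).
Proof.
have [i [j [ne_ij same_parity]]] :=
  exists_cols_same_pattern (fun x : Z64 => odd x) T isT.
have [k [ne_ki ne_kj]] := exists_ord_neq2 i j isT.
have [W eq_W] : exists W, col i T = col j T + 2%:R *: W.
  by apply: Zp_mx_eqmod => r c; rewrite !mxE !modn2 same_parity.
pose f (x : 'I_3) := nth i [:: i; j; k] x.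
have f_inj : injective f.
  move=> x y /eqP; rewrite nth_uniq //= => [/eqP/val_inj //|].
  by rewrite !inE !negb_or ![_ == k]eq_sym ne_ij ne_ki ne_kj.
have eq_col01 : col 0 (colsub f T) = col 1 (colsub f T) + 2%:R *: W.
  by rewrite !col_colsub; exact: eq_W.
exists f; split; first exact: f_inj; split.
  have [y ->] := det_col_congr eq_col01 isT.
  exact: Zp_dvd_natmul y modulus_gt1 two_dvd_modulus.
have [h [nz_h h2_0]] := Zp_torsion_natmul modulus_gt1 (isT : (1 < 2)%N)
  two_dvd_modulus.
exact: mulmx_col_congr_kernel eq_col01 isT nz_h h2_0.
Qed.
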